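(* Let $b\ge 3$, let $\mathbb R_b$ be a complete system of residues mod $b$ (possibly containing negative integers), and let $D\subset\mathbb R_b$ with $2\le|D|<b$. Suppose $S\subset\mathbb R_b$ is a set of integers with $|S|>1$ and $S-S=\{s-s':s,s'\in S\}\subseteq D$. Then $\mathcal C=\mathcal C_{b,D}$ is van der Corput with power savings of order $c=\frac{\log|S|}{\log b}$, i.e. $T(\mathcal C,N)\ll N^{-c}$; in particular $I(\mathcal C,N)\ll N^{-c}$, i.e. every $A\subset[N]$ with $(A-A)\cap\mathcal C=\emptyset$ satisfies $|A|\ll N^{1-c}$.
   Context: $\mathcal C_{b,D}=\{\sum_{j=0}^{k} d_j b^j : k\in\mathbb N_0,\ d_j\in D\}$. $[N]=\{1,\dots,N\}$. For $H\subset\mathbb Z$: $I(H,N)=\max\{|A|/N: A\subset[N],\ (A-A)\cap H=\emptyset\}$ (differences $a-a'$ with $a\neq a'$); $T(H,N)=\inf a_0$ over all real trigonometric polynomials $T(x)=a_0+\sum_{n<N,\,n\in H} a_n\cos(2\pi n x)$ with $T(0)=1$ and $T(x)\ge 0$ for all $x$. $H$ has power savings of order $c$ in the van der Corput property if $T(H,N)\ll N^{-c}$, and in the intersective property if $I(H,N)\ll N^{-c}$. *)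

From HB Require Import structures.
From mathcomp Require Import all_boot all_order all_algebra.
From mathcomp Require Import boolp classical_sets reals trigo exp.
Set Implicit Arguments. Unset Strict Implicit. Unset Printing Implicit Defensive.
Import Order.TTheory GRing.Theory Num.Theory.
Local Open Scope ring_scope.
Local Open Scope classical_set_scope.

Definition digit_set (b : nat) (D : seq int) : set int :=
  [set n | exists (k : nat) (d : 'I_k.+1 -> int),
     (forall j, d j \in D) /\ n = \sum_(j < k.+1) d j * (b%:Z) ^+ j].

Definition complete_residue_system (b : nat) (R : seq int) : Prop :=
  size R = b /\ uniq [seq (x %% b%:Z)%Z | x <- R].

Definition trig_poly (R : realType) (H : set int) (N : nat) (a : nat -> R) (x : R) : R :=
  a 0%N + \sum_(1 <= n < N | `[< H n%:Z \/ H (- n%:Z) >]) a n * cos (2 * pi * n%:R * x).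

Definition vdC_T (R : realType) (H : set int) (N : nat) : R :=
  inf [set a0 | exists a : nat -> R, a 0%N = a0 /\ trig_poly H N a 0 = 1 /\
                 (forall x, 0 <= trig_poly H N a x)].

(* A subset of [N] = {1..N}, represented by 'I_N with i standing for i+1, with
   no nonzero difference in H *)
Definition intersective_adm (H : set int) (N : nat) (A : {set 'I_N}) : Prop :=
  forall a a' : 'I_N, a \in A -> a' \in A -> a != a' -> ~ H (a%:Z - a'%:Z).

Definition intersective_I (R : realType) (H : set int) (N : nat) : R :=
  sup [set (#|A|%:R / N%:R : R) | A in intersective_adm H (N := N)].

From HB Require Import structures.
From mathcomp Require Import all_boot all_order all_algebra.
From mathcomp Require Import boolp classical_sets reals trigo exp.
From mathcomp Require Import lra zify.
Set Implicit Arguments.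
Unset Strict Implicit.
Unset Printing Implicit Defensive.
Import Order.TTheory GRing.Theory Num.Theory.
Local Open Scope ring_scope.
Local Open Scope classical_set_scope.

(* Let m = |S|.  Because S lies in a complete residue system, the m^k integers
   sum_(j<k) s_j b^j with s_j in S are pairwise distinct (read them off digit
   by digit modulo b), they have size O(b^k), and all their pairwise differences
   lie in C_{b,D} since S - S is contained in D.  Any such set V of differences
   in H with |V - V| < N gives T(H,N) <= 1/|V|, through the nonnegative
   polynomial |V|^-2 |sum_(v in V) e(v x)|^2, and I(H,N) <= 2/|V|, since the
   translates A - v (v in V) of an admissible A are disjoint.  Taking b^k of
   order N gives the savings m^-k ~ N^(-log m / log b). *)

Lemma cos_absz (R : realType) (d : int) (x : R) :
  cos (2 * pi * (absz d)%:R * x) = cos (2 * pi * d%:~R * x).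
Proof.
rewrite natr_absz intr_norm.
have [d0|d0] := lerP 0 (d%:~R : R); first by rewrite ger0_norm.
by rewrite ltr0_norm // -cosN; congr cos; lra.
Qed.

Lemma sum_cos_diff_ge0 (R : realType) (F : finType) (v : F -> int) (x : R) :
  0 <= \sum_f \sum_g cos (2 * pi * (v f - v g)%:~R * x).
Proof.
have -> : \sum_f \sum_g cos (2 * pi * (v f - v g)%:~R * x) =
    (\sum_f cos (2 * pi * (v f)%:~R * x)) ^+ 2 +
    (\sum_f sin (2 * pi * (v f)%:~R * x)) ^+ 2.
  rewrite !expr2 !mulr_suml -big_split /=; apply: eq_bigr => f _.
  rewrite !mulr_sumr -big_split /=; apply: eq_bigr => g _.
  by rewrite -cosB; congr cos; rewrite rmorphB /=; lra.
by rewrite addr_ge0 // sqr_ge0.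
Qed.

Section FejerPolynomial.

Variables (R : realType) (H : set int) (N : nat) (F : finType) (v : F -> int).
Hypothesis v_inj : injective v.
Hypothesis vH : forall f g, f != g -> H (v f - v g).
Hypothesis vN : forall f g, `|v f - v g| < N%:Z.

Let n := #|F|.

(* The coefficients of |n^-1 sum_f e(v f x)|^2 = n^-2 sum_(f,g) cos(2 pi (v f - v g) x),
   grouped by frequency |v f - v g|. *)
Definition fejer_coef (i : nat) : R :=
  ((i == 0)%:R * n%:R + \sum_f \sum_(g | g != f) (absz (v f - v g) == i)%:R)
  / n%:R ^+ 2.

Lemma sum_trig_poly_freq (d : int) (x : R) : d != 0 -> H d -> `|d| < N%:Z ->
  \sum_(1 <= i < N | `[< H i%:Z \/ H (- i%:Z) >])
      ((absz d == i)%:R * cos (2 * pi * i%:R * x))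
  = cos (2 * pi * d%:~R * x).
Proof.
move=> d0 Hd dN.
have d_ge1 : (1 <= absz d)%N by rewrite lt0n absz_eq0.
have d_ltN : (absz d < N)%N by rewrite -ltz_nat abszE.
have Hfreq : `[< H (absz d)%:Z \/ H (- (absz d)%:Z) >].
  apply/asboolP; rewrite abszE.
  have [d_ge0|d_lt0] := lerP 0 d; first by left; rewrite ger0_norm.
  by right; rewrite ltr0_norm // opprK.
rewrite big_mkcond /= (bigD1_seq (absz d)) /=; last exact: iota_uniq.
  rewrite Hfreq eqxx mul1r cos_absz big1 ?addr0 // => i /negbTE ni.
  by rewrite eq_sym ni mul0r if_same.
by rewrite mem_index_iota d_ge1.
Qed.

Lemma fejer_coef0 : (0 < n)%N -> fejer_coef 0 = n%:R^-1.
Proof.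
move=> n_gt0; have n0 : (n%:R : R) != 0 by rewrite pnatr_eq0 -lt0n.
rewrite /fejer_coef /= mul1r big1 ?addr0 => [|f _]; last first.
  by apply: big1 => g gf; rewrite absz_eq0 subr_eq0 (inj_eq v_inj) eq_sym (negbTE gf).
by rewrite expr2 invfM mulrA divff // mul1r.
Qed.

Lemma trig_poly_fejer (x : R) : (0 < n)%N ->
  trig_poly H N fejer_coef x =
  (\sum_f \sum_g cos (2 * pi * (v f - v g)%:~R * x)) / n%:R ^+ 2.
Proof.
move=> n_gt0; have n0 : (n%:R : R) != 0 by rewrite pnatr_eq0 -lt0n.
have off_diag : \sum_(1 <= i < N | `[< H i%:Z \/ H (- i%:Z) >])
      (fejer_coef i * cos (2 * pi * i%:R * x)) =
    (\sum_f \sum_(g | g != f) cos (2 * pi * (v f - v g)%:~R * x)) / n%:R ^+ 2.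
  under eq_bigr do rewrite /fejer_coef mulrDl mulrDl.
  rewrite big_split /= [X in X + _]big_nat_cond [X in X + _]big1 ?add0r; last first.
    by move=> i /andP[/andP[]]; case: i => // i _ _ _; rewrite !mul0r.
  under eq_bigr do rewrite mulrAC.
  rewrite -mulr_suml; congr (_ / _).
  under [LHS]eq_bigr => i _ do rewrite mulr_suml.
  under [LHS]eq_bigr => i _ do under eq_bigr => f _ do rewrite mulr_suml.
  rewrite /= exchange_big; apply: eq_bigr => f _.
  rewrite exchange_big; apply: eq_bigr => g gf.
  have fg : v f - v g != 0 by rewrite subr_eq0 (inj_eq v_inj) eq_sym.
  by rewrite sum_trig_poly_freq //; apply: vH; rewrite eq_sym.
have diag : n%:R^-1 = (\sum_f cos (2 * pi * (v f - v f)%:~R * x)) / n%:R ^+ 2.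
  under eq_bigr do rewrite subrr mulr0 mul0r cos0.
  by rewrite sumr_const -/n expr2 invfM mulrA divff // mul1r.
rewrite /trig_poly off_diag fejer_coef0 // diag -mulrDl; congr (_ / _).
rewrite -big_split /=; apply: eq_bigr => f _.
by rewrite [RHS](bigD1 f).
Qed.

Lemma vdC_T_le_inv_card : (0 < n)%N -> vdC_T R H N <= n%:R^-1.
Proof.
move=> n_gt0; have n0 : (n%:R : R) != 0 by rewrite pnatr_eq0 -lt0n.
rewrite /vdC_T; set E := [set a0 | _].
have fejer_in_E : E n%:R^-1.
  exists fejer_coef; split; first exact: fejer_coef0.
  split => [|x]; rewrite trig_poly_fejer //.
    under eq_bigr do under eq_bigr do rewrite mulr0 cos0.
    by rewrite !sumr_const -/n -[_ *+ n]mulr_natr -expr2 divff // expf_neq0.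
  by rewrite divr_ge0 ?sum_cos_diff_ge0 ?exprn_ge0.
(* When the set has no lower bound, [inf] is [0] by convention. *)
have [lb|no_lb] := pselect (has_lbound E); first exact: ge_inf.
by rewrite inf_out ?invr_ge0 //; case.
Qed.

End FejerPolynomial.

(* The map (a, f) |-> a - v f + W is injective on A x F, and lands in [0, N + 2W). *)
Lemma card_adm_mul_le (H : set int) (N : nat) (F : finType) (v : F -> int) (W : nat)
    (A : {set 'I_N}) :
  injective v -> (forall f g, f != g -> H (v f - v g)) -> (forall f, `|v f| <= W%:Z) ->
  intersective_adm H A -> (#|A| * #|F| <= N + 2 * W)%N.
Proof.
move=> v_inj vH vW adm.
pose shift (p : 'I_N * F) : nat := absz (p.1%:Z - v p.2 + W%:Z).
have shiftE p : (shift p)%:Z = p.1%:Z - v p.2 + W%:Z.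
  rewrite /shift abszE ger0_norm //.
  by have := vW p.2; rewrite ler_norml => /andP[_]; lia.
have := @uniq_leq_size _ [seq shift p | p <- enum (finset.setX A [set: F]%SET)]
  (iota 0 (N + 2 * W)).
rewrite size_map -cardE cardsX cardsT size_iota; apply.
  rewrite map_inj_in_uniq ?enum_uniq // => -[a f] [a' f'].
  rewrite !mem_enum !finset.in_setX !finset.in_setT !andbT /= => aA a'A.
  move=> /(congr1 Posz); rewrite !shiftE /= => e.
  have [aa'|aa'] := eqVneq a a'.
    have vff' : v f = v f' by move: e; rewrite aa'; lia.
    by rewrite aa' (v_inj _ _ vff').
  exfalso; apply: (adm _ _ aA a'A aa').
  have -> : (a : nat)%:Z - (a' : nat)%:Z = v f - v f' by lia.
  apply: vH; apply: contra_neq aa' => ff'.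
  by apply: ord_inj; move: e; rewrite ff'; lia.
move=> z /mapP [[a f] _ ->]; rewrite mem_iota add0n -ltz_nat shiftE /=.
have := vW f; rewrite ler_norml => /andP[vf _].
have := ltn_ord a; rewrite -ltz_nat PoszD PoszM.
by move: (v f) vf (nat_of_ord a) => y vf x; lia.
Qed.

Lemma vdC_T_intersective_I_le (R : realType) (H : set int) (N : nat) (F : finType)
    (v : F -> int) (W : nat) :
  injective v -> (forall f g, f != g -> H (v f - v g)) -> (forall f, `|v f| <= W%:Z) ->
  (2 * W < N)%N -> (0 < #|F|)%N ->
  vdC_T R H N <= #|F|%:R^-1 /\ intersective_I R H N <= 2 / #|F|%:R.
Proof.
move=> v_inj vH vW WN F_gt0; split.
  apply: (vdC_T_le_inv_card R v_inj vH _ F_gt0) => f g.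
  have := ler_normB (v f) (v g); have := vW f; have := vW g.
  by rewrite -ltz_nat in WN; lia.
have N_gt0 : (0 : R) < N%:R by rewrite ltr0n; lia.
have F_gt0' : (0 : R) < #|F|%:R by rewrite ltr0n.
apply: ge_sup.
  exists 0, finset.set0 => //; last by rewrite cards0 mul0r.
  by move=> a a'; rewrite finset.in_set0.
move=> _ [A adm <-]; rewrite ler_pdivrMr // mulrAC ler_pdivlMr //.
rewrite -natrM -[2 * N%:R]natrM ler_nat.
by have := card_adm_mul_le v_inj vH vW adm; lia.
Qed.

Lemma uniq_map_inj_in (T1 T2 : eqType) (h : T1 -> T2) (s : seq T1) :
  uniq (map h s) -> {in s &, injective h}.
Proof.
elim: s => //= x s IH /andP[hx_notin uniq_hs] y z.
rewrite !inE => /predU1P[->|ys] /predU1P[->|zs] e //.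
- by move: hx_notin; rewrite e map_f.
- by move: hx_notin; rewrite -e map_f.
- exact: IH.
Qed.

Lemma sum_expn_lt (b k : nat) : (1 < b)%N -> (\sum_(j < k) b ^ j < b ^ k)%N.
Proof.
move=> b_gt1; elim: k => [|k IH]; first by rewrite big_ord0 expn0.
rewrite big_ord_recr /= expnS.
by move: IH; move: (\sum_(j < k) _)%N (b ^ k)%N => s x; nia.
Qed.

Section Expansion.

Variables (b : nat) (S : seq int).
Hypothesis b_gt1 : (1 < b)%N.

Definition expansion k (f : {ffun 'I_k -> 'I_(size S)}) : int :=
  \sum_(j < k) S`_(f j) * b%:Z ^+ j.

Lemma expansionS k (f : {ffun 'I_k.+1 -> 'I_(size S)}) :
  expansion f = S`_(f ord0) + b%:Z * expansion [ffun j => f (lift ord0 j)].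
Proof.
rewrite /expansion big_ord_recl expr0 mulr1 mulr_sumr; congr (_ + _).
by apply: eq_bigr => j _; rewrite ffunE exprS mulrCA.
Qed.

Lemma expansion_inj k : uniq S ->
  {in S &, injective (fun x => (x %% b%:Z)%Z)} -> injective (@expansion k).
Proof.
move=> uniqS modb_inj; elim: k => [|k IH] f g.
  by move=> _; apply/ffunP => -[].
rewrite !expansionS => e.
have e0 : S`_(f ord0) = S`_(g ord0).
  apply: modb_inj; rewrite ?mem_nth //=.
  rewrite -(modzMDl (expansion [ffun j => f (lift ord0 j)])) mulrC addrC e.
  by rewrite addrC mulrC modzMDl.
have /IH e' :
    expansion [ffun j => f (lift ord0 j)] = expansion [ffun j => g (lift ord0 j)].
  by move: e; rewrite e0 => /addrI /mulfI; apply; rewrite eqz_nat gtn_eqF // ltnW.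
apply/ffunP => j; have [j' ->|->] := unliftP ord0 j.
  by move/ffunP/(_ j'): e'; rewrite !ffunE.
by apply: val_inj; apply/eqP; rewrite -(nth_uniq 0 _ _ uniqS) ?ltn_ord // e0.
Qed.

Lemma norm_expansion_le k (f : {ffun 'I_k -> 'I_(size S)}) :
  `|expansion f| <= ((\sum_(s <- S) absz s) * (b ^ k).-1)%N%:Z.
Proof.
set M := (\sum_(s <- S) absz s)%N.
apply: (le_trans (ler_norm_sum _ _ _)).
apply: (@le_trans _ _ (\sum_(j < k) (M * b ^ j)%N%:Z)).
  apply: ler_sum => j _; rewrite normrM normrX (@ger0_norm _ b%:Z) //.
  rewrite PoszM -[Posz (b ^ j)]natz natrX natz; apply: ler_wpM2r; first exact: exprn_ge0.
  by rewrite -abszE lez_nat /M (big_rem _ (mem_nth 0 (ltn_ord (f j)))) leq_addr.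
under eq_bigr do rewrite -natz.
rewrite -natr_sum natz lez_nat -big_distrr leq_mul2l /=.
by rewrite -ltnS prednK ?expn_gt0 ?(ltnW b_gt1) // sum_expn_lt ?orbT.
Qed.

Lemma digit_set_expansionB (D : seq int) k (f g : {ffun 'I_k -> 'I_(size S)}) :
  0 \in D -> (forall s s', s \in S -> s' \in S -> s - s' \in D) ->
  digit_set b D (expansion f - expansion g).
Proof.
move=> D0 SD.
pose d (j : 'I_k.+1) : int :=
  if insub (val j) is Some j' then S`_(f j') - S`_(g j') else 0.
exists k, d; split.
  by move=> j; rewrite /d; case: insubP => [j' _ _|_] //; apply: SD; rewrite mem_nth.
rewrite big_ord_recr /= /d insubF ?ltnn // mul0r addr0 /expansion -sumrB.
apply: eq_bigr => j _; rewrite (insubT (fun x => x < k)%N (ltn_ord j)) /= mulrBl.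
by congr (S`_(f _) * _ - S`_(g _) * _); apply: val_inj.
Qed.

End Expansion.

Lemma exists_scale (b E N : nat) : (1 < b)%N -> (0 < E)%N -> (0 < N)%N ->
  exists k, (E.-1 * (b ^ k).-1 < N)%N /\ (N < E * b ^ k.+1)%N.
Proof.
move=> b_gt1 E_gt0 N_gt0; exists (trunc_log b (N %/ E)); split; last first.
  have := ltn_ceil N E_gt0; have := trunc_log_ltn (N %/ E) b_gt1.
  by move: (b ^ _)%N => x; nia.
have [NE0|NE_gt0] := posnP (N %/ E); first by rewrite NE0 trunc_log0 expn0 muln0.
have := trunc_logP b_gt1 NE_gt0; have := leq_divM N E.
have := expn_gt0 b (trunc_log b (N %/ E)); rewrite (ltnW b_gt1) /=.
by move: (b ^ _)%N => x; nia.
Qed.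

Lemma powR_ln_div_ln (R : realType) (b m : nat) : (1 < b)%N -> (0 < m)%N ->
  (b%:R : R) `^ (ln m%:R / ln b%:R) = m%:R.
Proof.
move=> b_gt1 m_gt0; have lnb : 0 < ln (b%:R : R) by rewrite ln_gt0 // ltr1n.
rewrite /powR gt_eqF ?ltr0n ?(ltn_trans _ b_gt1) //.
by rewrite divfK ?gt_eqF // lnK // posrE ltr0n.
Qed.

Lemma inv_expr_le_powRN (R : realType) (b m E N k : nat) (c : R) :
  (0 < m)%N -> (0 < N)%N -> 0 <= c -> b%:R `^ c = m%:R :> R ->
  (N < E * b ^ k.+1)%N ->
  (m%:R ^+ k)^-1 <= m%:R * E%:R `^ c * N%:R `^ (- c) :> R.
Proof.
move=> m_gt0 N_gt0 c_ge0 bc NE.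
have Nc : (N%:R : R) `^ c <= E%:R `^ c * m%:R ^+ k.+1.
  apply: (@le_trans _ _ ((E * b ^ k.+1)%:R `^ c)).
    by apply: ge0_ler_powR; rewrite ?nnegrE ?ler0n // ler_nat ltnW.
  by rewrite natrM powRM ?ler0n // natrX -powR_mulrn ?ler0n // powRAC bc powR_mulrn.
have Nc_gt0 : 0 < (N%:R : R) `^ c by rewrite powR_gt0 // ltr0n.
have mk_gt0 : 0 < (m%:R : R) ^+ k by rewrite exprn_gt0 // ltr0n.
rewrite powRN -div1r ler_pdivrMr // mulrAC ler_pdivlMr // mul1r.
by rewrite mulrAC -exprS mulrC.
Qed.

Theorem mainTheorem3 (R : realType) (b : nat) (Rb D S : seq int) :
  (3 <= b)%N ->
  complete_residue_system b Rb ->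
  uniq D -> {subset D <= Rb} -> (2 <= size D)%N -> (size D < b)%N ->
  uniq S -> {subset S <= Rb} -> (1 < size S)%N ->
  (forall s s', s \in S -> s' \in S -> s - s' \in D) ->
  let c : R := ln (size S)%:R / ln b%:R in
  exists K : R, 0 < K /\
    forall N : nat, (1 <= N)%N ->
      vdC_T R (digit_set b D) N <= K * (N%:R `^ (- c)) /\
      intersective_I R (digit_set b D) N <= K * (N%:R `^ (- c)).
Proof.
move=> b_ge3 [_ uniq_modRb] _ _ _ _ uniqS SRb S_gt1 SD c.
have b_gt1 : (1 < b)%N by apply: ltn_trans b_ge3.
have m_gt0 : (0 < size S)%N by apply: ltn_trans S_gt1.
have D0 : 0 \in D by rewrite -(subrr S`_0) SD ?mem_nth.
have modb_inj : {in S &, injective (modz^~ b%:Z)}.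
  by move=> x y xS yS; apply: (uniq_map_inj_in uniq_modRb); apply: SRb.
have c_ge0 : 0 <= c by rewrite divr_ge0 ?ln_ge0 // ler1n ?(ltnW b_gt1).
set M := (\sum_(s <- S) absz s)%N; set E := (2 * M).+1.
exists (2 * (size S)%:R * E%:R `^ c); split; first by rewrite !mulr_gt0 ?powR_gt0 ?ltr0n.
move=> N N_gt0; have [k [spread NE]] := exists_scale b_gt1 (ltn0Sn (2 * M)) N_gt0.
have spread' : (2 * (M * (b ^ k).-1) < N)%N by rewrite mulnA.
have card_gt0 : (0 < #|{ffun 'I_k -> 'I_(size S)}|)%N.
  by rewrite card_ffun !card_ord expn_gt0 m_gt0.
have [vdC_le I_le] := vdC_T_intersective_I_le R (expansion_inj b_gt1 uniqS modb_inj)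
  (fun f g _ => digit_set_expansionB b f g D0 SD) (norm_expansion_le b_gt1 (k:=k))
  spread' card_gt0.
have := inv_expr_le_powRN m_gt0 N_gt0 c_ge0 (powR_ln_div_ln R b_gt1 m_gt0) NE.
have : 0 <= (((size S)%:R : R) ^+ k)^-1 by rewrite invr_ge0 exprn_ge0.
rewrite card_ffun !card_ord natrX in vdC_le I_le; rewrite -!mulrA.
move: (_^-1) (_ * (_ * _)) vdC_le I_le => x y; lra.
Qed.
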